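(* Let $(\mathcal{L},\mathcal{D}(\mathcal{L}))$ be the generator of a $C_0$-contraction semigroup on a Banach space $\mathcal{X}$ and $M\in\mathcal{B}(\mathcal{X})$ a contraction such that there is $\tilde c>0$ with $\|M^n-\sum_{j=1}^J\lambda_j^nP_j\|_\infty\le\tilde c\,\delta^n$ for all $n\in\mathbb{N}$, for projections $\{P_j\}_{j=1}^J$ with $P_jP_k=1_{j=k}P_j$, $|\lambda_j|=1$, and $\delta\in(0,1)$. Let $P_\Sigma=\sum_{j=1}^JP_j$, assume $M\mathcal{L}$ and $\mathcal{L}P_\Sigma$ are densely defined and bounded by $b\ge0$, $\|P_j\|_\infty=1$ for all $j\in\{1,\dots,J,\Sigma\}$, and put $c_p=\|\mathbf{1}-P_\Sigma\|_\infty$. Let $\tilde\delta\in(\delta,1)$. Then there are $\epsilon_1>0$ and $c_2\ge0$ such that for all $t\ge0$ and $n\in\mathbb{N}$ with $t\in[0,n\epsilon_1]$, $$\Big\|\big(Me^{\frac tn\mathcal{L}}\big)^n-\big(P_\Sigma Me^{\frac tn\mathcal{L}}P_\Sigma\big)^n\Big\|_\infty\le c_2\tilde\delta^n+\frac{tb}{n}+\frac1n\,\frac{tbc_pc_2(2+tbc_pc_2)(\tilde\delta-\tilde\delta^n)}{1-\tilde\delta}e^{2tbc_pc_2}.$$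
   Context: $\mathcal{B}(\mathcal{X})$: bounded operators with operator norm $\|\cdot\|_\infty$; $\mathbf{1}$ the identity; contraction: norm at most $1$; projection: bounded idempotent. A $C_0$-contraction semigroup is a strongly continuous semigroup of contractions, denoted $e^{t\mathcal{L}}$ by its generator. A densely defined operator bounded by $b$ is identified with its bounded extension to $\mathcal{X}$ of norm at most $b$. $1_{j=k}$ is $1$ if $j=k$ and $0$ otherwise. *)

From HB Require Import structures.
From mathcomp Require Import all_boot all_order all_algebra.
From mathcomp Require Import all_classical all_reals all_analysis.
From mathcomp.real_closed Require Import complex.
Set Implicit Arguments. Unset Strict Implicit. Unset Printing Implicit Defensive.
Import Order.TTheory GRing.Theory Num.Theory.
Import numFieldNormedType.Exports.
Local Open Scope classical_set_scope.
Local Open Scope ring_scope.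
Local Open Scope complex_scope.

Section Ops.
Variables (R : realType) (X : completeNormedModType R[i]).

Definition bounded_by (A : X -> X) (c : R) : Prop :=
  forall x : X, `|A x| <= c%:C * `|x|.

Definition bounded_op (A : X -> X) : Prop := exists c : R, bounded_by A c.

(* operator norm ||A||_oo = sup { ||A x|| : ||x|| <= 1 } (norms of X are
   real elements of R[i]; we take their real part) *)
Definition opnorm (A : X -> X) : R :=
  sup [set complex.Re `|A x| | x in [set x : X | `|x| <= 1]].

(* T : R -> (X -> X) is a C_0-contraction semigroup (used for t >= 0) *)
Definition C0_contraction_semigroup (T : R -> {linear X -> X}) : Prop :=
  [/\ (forall x, T 0 x = x),
      (forall s t x, 0 <= s -> 0 <= t -> T (s + t) x = T s (T t x)),
      (forall t, 0 <= t -> bounded_by (T t) 1) &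
      (forall x, T t x @[t --> 0^'+] --> x)].

Definition is_generator (T : R -> {linear X -> X}) (D : set X) (L : X -> X)
  : Prop :=
  (D = [set x | cvg ((h^-1)%:C *: (T h x - x) @[h --> 0^'+])]) /\
  (forall x, D x -> (h^-1)%:C *: (T h x - x) @[h --> 0^'+] --> L x).

End Ops.

From HB Require Import structures.
From mathcomp Require Import all_boot all_order all_algebra.
From mathcomp Require Import all_classical all_reals all_analysis.
From mathcomp.real_closed Require Import complex.
From mathcomp Require Import ring lra.
Import Order.TTheory GRing.Theory Num.Theory.
Import numFieldNormedType.Exports.
Local Open Scope classical_set_scope.
Local Open Scope ring_scope.
Local Open Scope complex_scope.

(* Write s = t/n, A = M e^{sL} and B = P_Sigma A P_Sigma.  The spectral hypothesis
   forces M P_j = P_j M = lambda_j P_j, so P_Sigma commutes with M and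
   ||M^m (1 - P_Sigma)|| <= (ct + 2) delta^m.  On the dense domain, e^{sL} z - z is
   the integral of e^{rL} L z over [0, s], whence ||M (e^{sL} - 1)|| <= s b.  Split
   A^k x into q_k = (1 - P_Sigma) A^k x and P_Sigma A^k x: q_k is fed by defects of
   size s b and damped geometrically, so ||q_k|| <~ delta^k + s b / (1 - delta),
   while P_Sigma A^k x - B^k x grows by at most s b ||q_k|| per step.  Hence
   ||A^n - B^n|| <= (ct + 2) (delta^n + (2 s b + n (s b)^2) / (1 - delta)), which
   the stated bound dominates once c2 = (ct + 2) / ((1 - delta) dt). *)

Set Implicit Arguments.
Unset Strict Implicit.

Lemma le_geometric_eq0 (R : realType) (d C r : R) :
  0 < d -> d < 1 -> 0 <= r -> (forall n, (0 < n)%N -> r <= C * d ^+ n) -> r = 0.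
Proof.
move=> d0 d1 r0 le_r; apply/le_anti; rewrite r0 andbT.
have Cd0 : C * d ^+ n @[n --> \oo] --> 0.
  by rewrite -(mulr0 C); apply: cvgMr; apply: cvg_expr; rewrite ger0_norm ?ltW.
rewrite -(cvg_lim _ Cd0) //; apply: limr_ge; first exact: cvgP Cd0.
by exists 1%N => // n; apply: le_r.
Qed.

Lemma sum_expr_le_inv (R : realFieldType) (d : R) k :
  0 <= d -> d < 1 -> \sum_(i < k) d ^+ i <= (1 - d)^-1.
Proof.
move=> d0 d1; have subd_gt0 : 0 < 1 - d by rewrite subr_gt0.
have geometric_sum : (1 - d) * \sum_(i < k) d ^+ i = 1 - d ^+ k.
  by rewrite -opprB mulNr -subrX1 opprB.
by rewrite -(ler_pM2l subd_gt0) geometric_sum mulfV ?gt_eqF // gerBl exprn_ge0.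
Qed.

Section IterLinear.
Variables (R : pzRingType) (U : lmodType R) (f : {linear U -> U}) (n : nat).

Fact iter_is_linear : linear (iter n f).
Proof. by elim: n => [|m IH] a x y //=; rewrite IH linearP. Qed.

HB.instance Definition _ :=
  GRing.isLinear.Build R U U *:%R (iter n f) iter_is_linear.

End IterLinear.

Section RealNorm.
Variables (R : realType) (X : completeNormedModType R[i]).

Definition nrm (x : X) : R := complex.Re `|x|.

Lemma nrmE x : `|x| = (nrm x)%:C.
Proof. by rewrite /nrm; have := ger0_Im (normr_ge0 x); case: `|x| => a b /= ->. Qed.

Lemma nrm_ge0 x : 0 <= nrm x.
Proof. by rewrite -ler0c -nrmE. Qed.

Lemma nrm0 : nrm 0 = 0.
Proof. by rewrite /nrm normr0. Qed.

Lemma nrm_eq0 x : (nrm x == 0) = (x == 0).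
Proof.
by rewrite -[x == 0]normr_eq0 nrmE -(rmorph0 (real_complex R)) (inj_eq (@complexI R)).
Qed.

Lemma nrmN x : nrm (- x) = nrm x.
Proof. by rewrite /nrm normrN. Qed.

Lemma nrmD x y : nrm (x + y) <= nrm x + nrm y.
Proof. by rewrite -lecR raddfD /= -!nrmE ler_normD. Qed.

Lemma nrmB x y : nrm (x - y) <= nrm x + nrm y.
Proof. by rewrite -(nrmN y) nrmD. Qed.

Lemma nrmZ (a : R[i]) x : nrm (a *: x) = complex.Re `|a| * nrm x.
Proof. by rewrite /nrm normrZ nrmE; case: `|a| => p q; rewrite /= mulr0 subr0. Qed.

Lemma nrmZ_real (a : R) x : nrm (a%:C *: x) = `|a| * nrm x.
Proof. by rewrite nrmZ normc_def /= expr0n /= addr0 sqrtr_sqr. Qed.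

Lemma nrmZ_unimodular (a : R[i]) x : `|a| = 1 -> nrm (a *: x) = nrm x.
Proof. by move=> a1; rewrite nrmZ a1 mul1r. Qed.

Lemma nrm_sum I (r : seq I) (F : I -> X) :
  nrm (\sum_(i <- r) F i) <= \sum_(i <- r) nrm (F i).
Proof.
elim: r => [|a r IH]; first by rewrite !big_nil nrm0.
by rewrite !big_cons (le_trans (nrmD _ _)) // lerD2l.
Qed.

Lemma nrm_sum_ord n (F : 'I_n -> X) c :
  (forall j, nrm (F j) <= c) -> nrm (\sum_(j < n) F j) <= n%:R * c.
Proof.
move=> Fc; apply: le_trans (nrm_sum _ _) _.
have -> : n%:R * c = \sum_(j < n) c by rewrite sumr_const card_ord mulr_natl.
by apply: ler_sum => j _; apply: Fc.
Qed.

Lemma nrm_le1 x : (`|x| <= 1) = (nrm x <= 1).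
Proof. by rewrite nrmE -lecR rmorph1. Qed.

Lemma nrm_le_geometric_eq0 (d C : R) (w : X) : 0 < d -> d < 1 ->
  (forall n, (0 < n)%N -> nrm w <= C * d ^+ n) -> w = 0.
Proof.
move=> d0 d1 le_w; apply/eqP; rewrite -nrm_eq0; apply/eqP.
exact: le_geometric_eq0 d0 d1 (nrm_ge0 w) le_w.
Qed.

Lemma bounded_byE (A : X -> X) c :
  bounded_by A c <-> forall x, nrm (A x) <= c * nrm x.
Proof. by split=> Ac x; have := Ac x; rewrite !nrmE -rmorphM lecR. Qed.

Lemma bounded_op_nrm (A : X -> X) c :
  (forall x, nrm (A x) <= c * nrm x) -> bounded_op A.
Proof. by move=> Ac; exists c; apply/bounded_byE. Qed.

Lemma opnorm_le (A : X -> X) c :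
  0 <= c -> (forall x, nrm (A x) <= c * nrm x) -> opnorm A <= c.
Proof.
move=> c0 Ac; apply: ge_sup; first by exists (nrm (A 0)), 0; rewrite //= normr0 ler01.
by move=> _ [x /= x1 <-]; apply: le_trans (Ac x) _; rewrite ler_piMr // -nrm_le1.
Qed.

Lemma opnorm_ub (A : X -> X) x : bounded_op A -> nrm x <= 1 -> nrm (A x) <= opnorm A.
Proof.
case=> c /bounded_byE Ac x1; apply: ub_le_sup; last by exists x; rewrite //= nrm_le1.
exists `|c| => _ [y /= y1 <-]; apply: le_trans (Ac y) _.
by rewrite (le_trans (ler_wpM2r (nrm_ge0 _) (ler_norm c))) // ler_piMr // -nrm_le1.
Qed.

Lemma opnorm_ge0 (A : X -> X) : bounded_op A -> 0 <= opnorm A.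
Proof. by move=> bA; rewrite (le_trans (nrm_ge0 (A 0))) // opnorm_ub ?nrm0. Qed.

Lemma nrm_le_opnorm (A : X -> X) x :
  bounded_op A -> scalable A -> nrm (A x) <= opnorm A * nrm x.
Proof.
move=> bA sA; have [->|x0] := eqVneq x 0.
  by have := sA 0 0; rewrite !scale0r => ->; rewrite nrm0 mulr0.
have nx0 : 0 < nrm x by rewrite lt_def nrm_eq0 x0 nrm_ge0.
have unit_x : nrm ((nrm x)^-1%:C *: x) <= 1.
  by rewrite nrmZ_real ger0_norm ?invr_ge0 ?nrm_ge0 // mulVf ?gt_eqF.
have := opnorm_ub bA unit_x; rewrite sA nrmZ_real ger0_norm ?invr_ge0 ?nrm_ge0 //.
by rewrite ler_pdivrMl // mulrC.
Qed.

Definition contraction (A : X -> X) := forall x, nrm (A x) <= nrm x.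

Lemma contraction_normr (A : X -> X) x : contraction A -> `|A x| <= `|x|.
Proof. by move=> A1; rewrite !nrmE lecR. Qed.

Lemma contraction_iter (A : X -> X) n : contraction A -> contraction (iter n A).
Proof. by move=> A1 x; elim: n => //= n IH; apply: le_trans (A1 _) IH. Qed.

Lemma contraction_comp (A B : X -> X) :
  contraction A -> contraction B -> contraction (A \o B).
Proof. by move=> A1 B1 x; apply: le_trans (A1 _) (B1 _). Qed.

Lemma contraction_iterB (A B : X -> X) n x : contraction A -> contraction B ->
  nrm (iter n A x - iter n B x) <= 2 * nrm x.
Proof.
move=> A1 B1; rewrite (le_trans (nrmB _ _)) // mulr2n mulrDl mul1r.
by rewrite lerD // contraction_iter.
Qed.

Lemma contraction_opnorm (A : X -> X) :
  bounded_op A -> scalable A -> opnorm A <= 1 -> contraction A.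
Proof.
by move=> bA sA A1 x; rewrite (le_trans (nrm_le_opnorm x bA sA)) // ler_piMl ?nrm_ge0.
Qed.

Lemma bounded_op_compl (Ps : X -> X) : contraction Ps -> bounded_op (fun x => x - Ps x).
Proof.
move=> Ps1; apply: (@bounded_op_nrm _ 2) => x.
by rewrite (le_trans (nrmB _ _)) // mulr2n mulrDl mul1r lerD.
Qed.

Lemma projection_id_of_compl_lt1 (Ps : {linear X -> X}) :
  contraction Ps -> (forall y, Ps (Ps y) = Ps y) ->
  opnorm (fun x => x - Ps x) < 1 -> forall y, Ps y = y.
Proof.
move=> Ps1 Ps_idem Q1 y; apply/eqP; rewrite eq_sym -subr_eq0 -nrm_eq0 eq_le nrm_ge0 andbT.
have bQ := bounded_op_compl Ps1.
have sQ : scalable (fun x => x - Ps x) by move=> a x; rewrite linearZ scalerBr.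
have := nrm_le_opnorm (y - Ps y) bQ sQ; rewrite linearB Ps_idem subrr subr0.
by have := nrm_ge0 (y - Ps y); have := opnorm_ge0 bQ; nra.
Qed.

Lemma dense_nrm_bound (G : X -> X) (S : set X) (K c : R) :
  (forall x y, G (x - y) = G x - G y) -> (forall x, nrm (G x) <= K * nrm x) ->
  0 <= K -> 0 <= c -> closure S = setT -> (forall z, S z -> nrm (G z) <= c * nrm z) ->
  forall x, nrm (G x) <= c * nrm x.
Proof.
move=> GB GK K0 c0 denseS Sc x; apply/ler_addgt0Pr => e e0.
have cK1 : 0 < c + K + 1 by rewrite ltr_wpDl // addr_ge0.
set d := e / (c + K + 1).
have d0 : 0 < d by rewrite divr_gt0.
have : closure S x by rewrite denseS.
move=> /(_ (ball x d%:C) (nbhsx_ballx _ _ _)) [|z [Sz]]; first by rewrite ltcE /= eqxx.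
rewrite -ball_normE /= nrmE ltcR => xz.
have -> : G x = G z - G (z - x) by rewrite -GB opprB addrC subrK.
apply: le_trans (nrmB _ _) _; apply: le_trans (lerD (Sc _ Sz) (GK _)) _.
have zx : nrm z <= nrm x + nrm (z - x).
  by rewrite (le_trans _ (nrmD _ _)) // addrC subrK.
have := ler_wpM2l c0 zx; rewrite -(nrmN (z - x)) opprB.
have : (c + K + 1) * nrm (x - z) <= (c + K + 1) * d by rewrite ler_pM2l // ltW.
rewrite [_ * d]mulrC /d divfK ?gt_eqF //.
by have := nrm_ge0 (x - z); lra.
Qed.

End RealNorm.

Section ProjectionSum.
Variables (R : realType) (X : completeNormedModType R[i]).
Variables (J : nat) (P : 'I_J -> {linear X -> X}).

Definition Psum x := \sum_(j < J) P j x.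

Fact Psum_is_linear : linear Psum.
Proof.
move=> a x y; rewrite /Psum scaler_sumr -big_split.
by apply: eq_bigr => j _; rewrite linearP.
Qed.

HB.instance Definition _ := GRing.isLinear.Build R[i] X X *:%R Psum Psum_is_linear.

Lemma bounded_op_Psum :
  (forall j, contraction (P j)) -> bounded_op Psum.
Proof.
move=> P1; apply: (@bounded_op_nrm _ _ _ J%:R) => x.
by rewrite /Psum; apply: nrm_sum_ord => j; apply: P1.
Qed.

Hypothesis orthP : forall j k x, P j (P k x) = if j == k then P j x else 0.

Lemma sumZ_P_orth (F : 'I_J -> R[i]) k y :
  \sum_(j < J) F j *: P j (P k y) = F k *: P k y.
Proof.
rewrite (bigD1 k) //= orthP eqxx big1 ?addr0 // => j /negPf jk.
by rewrite orthP jk scaler0.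
Qed.

Lemma P_sumZ_orth (F : 'I_J -> R[i]) k y :
  P k (\sum_(j < J) F j *: P j y) = F k *: P k y.
Proof.
rewrite linear_sum (bigD1 k) //= linearZ /= orthP eqxx big1 ?addr0 // => j /negPf jk.
by rewrite linearZ /= orthP eq_sym jk scaler0.
Qed.

Lemma Psum_idem y : Psum (Psum y) = Psum y.
Proof.
apply: eq_bigr => k _; have := P_sumZ_orth (fun=> 1) k y.
by under eq_bigr do rewrite scale1r; rewrite scale1r.
Qed.

Section Spectral.
Variables (M : {linear X -> X}) (lam : 'I_J -> R[i]) (delta ct : R).
Hypotheses (M1 : contraction M) (P1 : forall j, contraction (P j)).
Hypotheses (lam1 : forall j, `|lam j| = 1) (delta_gt0 : 0 < delta) (delta_lt1 : delta < 1).
Hypothesis ct_ge0 : 0 <= ct.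
Hypothesis asymptotics : forall n : nat, (0 < n)%N ->
  opnorm (fun x => iter n M x - \sum_(j < J) (lam j ^+ n) *: P j x) <= ct * delta ^+ n.

Lemma asymptotics_nrm n x : (0 < n)%N ->
  nrm (iter n M x - \sum_(j < J) lam j ^+ n *: P j x) <= ct * delta ^+ n * nrm x.
Proof.
move=> n_gt0; pose A x := iter n M x - \sum_(j < J) lam j ^+ n *: P j x.
have bA : bounded_op A.
  apply: (@bounded_op_nrm _ _ _ (1 + J%:R)) => y.
  rewrite mulrDl mul1r (le_trans (nrmB _ _)) // lerD ?contraction_iter //.
  apply: nrm_sum_ord => j.
  by rewrite nrmZ_unimodular ?normrX ?lam1 ?expr1n //; apply: P1.
have sA : scalable A.
  move=> a y; rewrite /A linearZ scalerBr scaler_sumr; congr (_ - _).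
  by apply: eq_bigr => j _; rewrite linearZ /= !scalerA mulrC.
apply: le_trans (nrm_le_opnorm x bA sA) _.
by rewrite ler_wpM2r ?nrm_ge0 ?asymptotics.
Qed.

Lemma geometric_step_le m r : 0 <= r ->
  ct * delta ^+ m.+1 * r + ct * delta ^+ m * r <= 2 * ct * r * delta ^+ m.
Proof.
move=> r0; have dm : delta ^+ m.+1 <= delta ^+ m.
  by rewrite exprS ler_piMl ?exprn_ge0 ?ltW.
have := mulr_ge0 ct_ge0 r0; nra.
Qed.

(* Both eigen-relations follow by comparing the asymptotics at n and n + 1: the
   defect, multiplied by a unimodular number, decays geometrically. *)
Lemma M_P k y : M (P k y) = lam k *: P k y.
Proof.
set z := P k y; apply/eqP; rewrite -subr_eq0; apply/eqP.
apply: (nrm_le_geometric_eq0 (C := 2 * ct * nrm z) delta_gt0 delta_lt1) => n n_gt0.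
have e_bound m : (0 < m)%N -> nrm (iter m M z - lam k ^+ m *: z) <= ct * delta ^+ m * nrm z.
  by move=> m_gt0; have := asymptotics_nrm z m_gt0; rewrite sumZ_P_orth.
rewrite -(nrmZ_unimodular (a := lam k ^+ n)) ?normrX ?lam1 ?expr1n //.
have -> : lam k ^+ n *: (M z - lam k *: z) =
    (iter n.+1 M z - lam k ^+ n.+1 *: z) - M (iter n M z - lam k ^+ n *: z).
  rewrite [M (_ - _)]linearB [M (_ *: _)]linearZ /= scalerBr scalerA -exprSr.
  by rewrite [RHS]addrC opprB addrA subrK.
apply: le_trans (nrmB _ _) _; apply: le_trans (geometric_step_le _ (nrm_ge0 z)).
by rewrite lerD ?e_bound // (le_trans (M1 _)) ?e_bound.
Qed.

Lemma P_M k y : P k (M y) = lam k *: P k y.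
Proof.
apply/eqP; rewrite -subr_eq0; apply/eqP.
apply: (nrm_le_geometric_eq0 (C := 2 * ct * nrm y) delta_gt0 delta_lt1) => n n_gt0.
have f_bound m x : (0 < m)%N ->
    nrm (P k (iter m M x) - lam k ^+ m *: P k x) <= ct * delta ^+ m * nrm x.
  move=> m_gt0; rewrite -(P_sumZ_orth (fun j => lam j ^+ m)) -linearB.
  exact: le_trans (P1 _ _) (asymptotics_nrm x m_gt0).
rewrite -(nrmZ_unimodular (a := lam k ^+ n)) ?normrX ?lam1 ?expr1n //.
have -> : lam k ^+ n *: (P k (M y) - lam k *: P k y) =
    (P k (iter n.+1 M y) - lam k ^+ n.+1 *: P k y)
    - (P k (iter n M (M y)) - lam k ^+ n *: P k (M y)).
  by rewrite -iterSr scalerBr scalerA -exprSr [RHS]addrC opprB addrA subrK.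
apply: le_trans (nrmB _ _) _; apply: le_trans (geometric_step_le _ (nrm_ge0 y)).
rewrite lerD ?f_bound // (le_trans (f_bound _ _ n_gt0)) // ler_wpM2l //.
exact: mulr_ge0 ct_ge0 (exprn_ge0 _ (ltW delta_gt0)).
Qed.

Lemma Psum_M y : Psum (M y) = M (Psum y).
Proof. by rewrite /Psum linear_sum; apply: eq_bigr => j _; rewrite P_M M_P. Qed.

Lemma iter_M_P m k y : iter m M (P k y) = lam k ^+ m *: P k y.
Proof. by elim: m => [|m IH]; rewrite ?scale1r //= IH linearZ /= M_P scalerA -exprSr. Qed.

Hypothesis Psum1 : contraction Psum.

Lemma iter_M_Psum_compl m z :
  nrm (iter m M (z - Psum z)) <= (ct + 2) * delta ^+ m * nrm z.
Proof.
case: m => [|m].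
  rewrite expr0 mulr1 (le_trans (nrmB _ _)) //.
  by have := Psum1 z; have := mulr_ge0 ct_ge0 (nrm_ge0 z); lra.
have -> : iter m.+1 M (z - Psum z) =
    iter m.+1 M z - \sum_(j < J) lam j ^+ m.+1 *: P j z.
  by rewrite linearB linear_sum; congr (_ - _); apply: eq_bigr => j _; apply: iter_M_P.
apply: le_trans (asymptotics_nrm (n := m.+1) z isT) _.
rewrite ler_wpM2r ?nrm_ge0 // ler_wpM2r ?lerDl //; exact: exprn_ge0 (ltW delta_gt0).
Qed.

End Spectral.
End ProjectionSum.

Section Semigroup.
Variables (R : realType) (X : completeNormedModType R[i]).
Variables (T : R -> {linear X -> X}) (D : set X) (L : X -> X).
Hypotheses (semiT : C0_contraction_semigroup T) (genL : is_generator T D L).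

Lemma semigroup0 x : T 0 x = x.
Proof. by case: semiT. Qed.

Lemma semigroupD s t x : 0 <= s -> 0 <= t -> T (s + t) x = T s (T t x).
Proof. by case: semiT => _ TD _ _; apply: TD. Qed.

Lemma semigroup_contraction t : 0 <= t -> contraction (T t).
Proof. by case: semiT => _ _ T1 _ t0 x; have /bounded_byE/(_ x) := T1 t t0; rewrite mul1r. Qed.

Lemma generator_semigroupC z r : D z -> 0 <= r -> D (T r z) /\ L (T r z) = T r (L z).
Proof.
move=> Dz r0; have [domL limL] := genL.
have quotient_lim : (h^-1)%:C *: (T h (T r z) - T r z) @[h --> 0^'+] --> T r (L z).
  apply/cvgrPdist_lt => e e0; move/cvgrPdist_lt: (limL z Dz) => /(_ e e0).
  apply: filterS2 (nbhs_right_gt 0) => h h0 Lz_close.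
  have -> : T h (T r z) = T r (T h z) by rewrite -!semigroupD ?(ltW h0) // addrC.
  rewrite -linearB -linearZ -linearB.
  exact: le_lt_trans (contraction_normr _ (semigroup_contraction r0)) Lz_close.
have DTz : D (T r z) by rewrite domL; apply: cvgP quotient_lim.
by split=> //; apply: cvg_unique (limL _ DTz) quotient_lim.
Qed.

Lemma generator_quotient_near z e : D z -> 0 < e -> exists2 eta : R, 0 < eta &
  forall h, 0 < h -> h < eta -> nrm (L z - (h^-1)%:C *: (T h z - z)) < e.
Proof.
move=> Dz e0; move/cvgrPdist_lt: (proj2 genL z Dz) => /(_ e%:C).
case=> [|eta /= eta0 near_Lz]; first by rewrite ltcE /= eqxx.
exists eta => // h h0 h_eta; rewrite -ltcR -nrmE; apply: near_Lz => //=.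
by rewrite /ball /= sub0r normrN gtr0_norm.
Qed.

Lemma semigroup_telescope h m z : 0 <= h ->
  T (m%:R * h) z - z = \sum_(i < m) T (i%:R * h) (T h z - z).
Proof.
move=> h0; pose u k := T (k%:R * h) z.
have -> : T (m%:R * h) z - z = u m - u 0%N by rewrite /u mul0r semigroup0.
rewrite -telescope_sumr // big_mkord /u.
apply: eq_bigr => i _; rewrite linearB -semigroupD ?mulr_ge0 //.
by rewrite -natr1 mulrDl mul1r.
Qed.

(* A Riemann-sum version of [T s z - z = int_0^s T r (L z) dr]. *)
Lemma semigroup_increment (G : {linear X -> X}) z s C : D z -> 0 <= s ->
  contraction G -> (forall r, 0 <= r -> nrm (G (T r (L z))) <= C) ->
  nrm (G (T s z - z)) <= s * C.
Proof.
move=> Dz s0 G1 GC; have [s_le0|s_gt0] := leP s 0.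
  have -> : s = 0 by apply/le_anti; rewrite s_le0 s0.
  by rewrite semigroup0 subrr linear0 nrm0 mul0r.
apply/ler_addgt0Pr => e e0.
have [eta eta0 quotient_close] := generator_quotient_near Dz (divr_gt0 e0 s_gt0).
set m := Num.bound (s / eta); set h := s / m%:R.
have m_gt0 : (0 : R) < m%:R.
  by rewrite (le_lt_trans _ (archi_boundP _)) ?divr_ge0 ?ltW.
have h0 : 0 < h by rewrite divr_gt0.
have h_eta : h < eta.
  by rewrite /h ltr_pdivrMr // mulrC -ltr_pdivrMr ?archi_boundP ?divr_ge0 ?ltW.
set w := T h z - z - h%:C *: L z.
have w_small : nrm w <= h * (e / s).
  have -> : w = - (h%:C *: (L z - (h^-1)%:C *: (T h z - z))).
    by rewrite scalerBr scalerA -rmorphM mulfV ?gt_eqF // scale1r opprB.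
  by rewrite nrmN nrmZ_real gtr0_norm // ler_pM2l // ltW // quotient_close.
have split_quotient : T h z - z = h%:C *: L z + w by rewrite /w [RHS]addrC subrK.
clearbody w.
have step i : nrm (G (T (i%:R * h) (T h z - z))) <= h * C + h * (e / s).
  rewrite split_quotient !linearD !linearZ /= (le_trans (nrmD _ _)) // lerD //.
    by rewrite nrmZ_real gtr0_norm // ler_pM2l // GC // mulr_ge0 // ltW.
  rewrite (le_trans (G1 _)) // (le_trans (semigroup_contraction _ _)) //.
  by rewrite mulr_ge0 // ltW.
have sE : s = m%:R * h by rewrite /h mulrC divfK ?gt_eqF.
rewrite {1}sE semigroup_telescope; last exact: ltW.
rewrite linear_sum (le_trans (nrm_sum _ _)) //.
rewrite (le_trans (ler_sum _ (fun (i : 'I_m) _ => step i))) // sumr_const card_ord.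
rewrite -[(_ + _) *+ m]mulr_natl mulrDr !mulrA [m%:R * s]mulrC mulfK ?gt_eqF //.
by rewrite [s * e]mulrC mulfK ?gt_eqF.
Qed.

Variables (M : {linear X -> X}) (b : R).
Hypotheses (M1 : contraction M) (b_ge0 : 0 <= b) (denseD : closure D = setT).
Hypothesis ML_bounded : forall x, D x -> `|M (L x)| <= b%:C * `|x|.

Lemma M_semigroup_increment s y : 0 <= s -> nrm (M (T s y - y)) <= s * b * nrm y.
Proof.
move=> s0; move: y.
apply: (dense_nrm_bound (G := fun y => M (T s y - y)) (S := D) (K := 2)) => //.
- by move=> u v /=; rewrite -linearB [T s (u - v)]linearB /= opprD addrACA -opprD.
- move=> u; rewrite (le_trans (M1 _)) // (le_trans (nrmB _ _)) // mulr2n mulrDl mul1r.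
  by rewrite lerD // semigroup_contraction.
- exact: mulr_ge0.
move=> z Dz; rewrite -mulrA; apply: semigroup_increment => // r r0.
have [DTz <-] := generator_semigroupC Dz r0.
have := ML_bounded DTz; rewrite !nrmE -rmorphM lecR => /le_trans; apply.
by rewrite ler_wpM2l // semigroup_contraction.
Qed.

End Semigroup.

Definition compression_rate (R : realType) (K d e : R) (n : nat) : R :=
  K * (d ^+ n + 2 * e / (1 - d) + n%:R * e ^+ 2 / (1 - d)).

Lemma compression_rate_ge0 (R : realType) (K d e : R) n :
  0 <= K -> 0 <= d -> d < 1 -> 0 <= e -> 0 <= compression_rate K d e n.
Proof.
move=> K_ge0 d_ge0 d_lt1 e_ge0; have subd_ge0 : 0 <= 1 - d by rewrite subr_ge0 ltW.
apply: mulr_ge0 K_ge0 (addr_ge0 (addr_ge0 (exprn_ge0 _ d_ge0) _) _).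
  exact: divr_ge0 (mulr_ge0 (ler0n _ 2) e_ge0) subd_ge0.
exact: divr_ge0 (mulr_ge0 (ler0n _ n) (exprn_ge0 2 e_ge0)) subd_ge0.
Qed.

(* [S], [Ps] and [e] stand for e^{sL}, P_Sigma and s b. *)
Section Trajectory.
Variables (R : realType) (X : completeNormedModType R[i]).
Variables (M S Ps : {linear X -> X}) (e K dl : R).
Hypotheses (M1 : contraction M) (S1 : contraction S) (Ps1 : contraction Ps).
Hypotheses (Ps_idem : forall y, Ps (Ps y) = Ps y) (Ps_M : forall y, Ps (M y) = M (Ps y)).
Hypothesis M_step : forall y, nrm (M (S y - y)) <= e * nrm y.
Hypothesis decay : forall m z, nrm (iter m M (z - Ps z)) <= K * dl ^+ m * nrm z.
Hypotheses (e_ge0 : 0 <= e) (K_ge0 : 0 <= K) (dl_ge0 : 0 <= dl) (dl_lt1 : dl < 1).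
Variable x : X.

Let A y := M (S y).
Let B y := Ps (M (S (Ps y))).
Let xk k := iter k A x.
Let qk k := xk k - Ps (xk k).
Let pk k := Ps (xk k) - Ps (iter k B x).

Let xk_le k : nrm (xk k) <= nrm x.
Proof. exact/contraction_iter/contraction_comp. Qed.

Let qk_succ k : qk k.+1 = M (qk k) + (M (S (xk k) - xk k) - Ps (M (S (xk k) - xk k))).
Proof.
rewrite /qk /xk iterS -/(xk k) /A; set d := M (S (xk k) - xk k).
have -> : M (S (xk k)) = M (xk k) + d by rewrite /d (linearB M) addrC subrK.
by rewrite (linearD Ps) (Ps_M (xk k)) (linearB M) opprD addrACA.
Qed.

Let iter_qk_le k m :
  nrm (iter m M (qk k)) <= K * nrm x * dl ^+ m * (dl ^+ k + e * \sum_(i < k) dl ^+ i).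
Proof.
elim: k m => [|k IH] m.
  by rewrite big_ord0 mulr0 addr0 expr0 mulr1 mulrAC decay.
have v_le : nrm (M (S (xk k) - xk k)) <= e * nrm x.
  by rewrite (le_trans (M_step _)) // ler_wpM2l ?xk_le.
have -> : iter m M (qk k.+1) = iter m.+1 M (qk k)
    + iter m M (M (S (xk k) - xk k) - Ps (M (S (xk k) - xk k))).
  by rewrite qk_succ iterSr linearD.
rewrite (le_trans (nrmD _ _)) // (le_trans (lerD (IH m.+1) (decay _ _))) //.
have := ler_wpM2l (mulr_ge0 K_ge0 (exprn_ge0 m dl_ge0)) v_le.
have sum_succ : \sum_(i < k.+1) dl ^+ i = 1 + dl * \sum_(i < k) dl ^+ i.
  rewrite big_ord_recl expr0 mulr_sumr; congr (_ + _).
  by apply: eq_bigr => i _; rewrite lift0 exprS.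
by rewrite sum_succ !exprS; lra.
Qed.

Let qk_le k : nrm (qk k) <= K * nrm x * (dl ^+ k + e / (1 - dl)).
Proof.
rewrite (le_trans (iter_qk_le k 0)) // expr0 mulr1 ler_wpM2l ?mulr_ge0 ?nrm_ge0 //.
by rewrite lerD2l ler_wpM2l // sum_expr_le_inv.
Qed.

Let pk_succ k : pk k.+1 = Ps (M (S (pk k))) + Ps (M (S (qk k) - qk k)).
Proof.
set y := iter k B x.
have Ps_M_qk : Ps (M (qk k)) = 0 by rewrite Ps_M (linearB Ps) Ps_idem subrr linear0.
have xk_succ : xk k.+1 = M (S (Ps (xk k))) + M (S (qk k)).
  by rewrite -!linearD /qk addrC subrK.
rewrite /pk xk_succ iterS -/y /B Ps_idem (linearD Ps).
rewrite (linearB S (Ps (xk k))) (linearB M (S (Ps (xk k)))).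
rewrite (linearB Ps (M (S (Ps (xk k))))) (linearB M (S (qk k))).
by rewrite (linearB Ps (M (S (qk k)))) Ps_M_qk subr0 addrAC.
Qed.

Let pk_le k : nrm (pk k) <= e * \sum_(i < k) nrm (qk i).
Proof.
elim: k => [|k IH]; first by rewrite /pk subrr nrm0 big_ord0 mulr0.
rewrite pk_succ big_ord_recr mulrDr (le_trans (nrmD _ _)) // lerD //.
  exact: le_trans (Ps1 _) (le_trans (M1 _) (le_trans (S1 _) IH)).
exact: le_trans (Ps1 _) (M_step _).
Qed.

Lemma trajectory_bound n : (0 < n)%N ->
  nrm (iter n (fun y => M (S y)) x - iter n (fun y => Ps (M (S (Ps y)))) x)
  <= compression_rate K dl e n * nrm x.
Proof.
rewrite /compression_rate; case: n => // n _.
have -> : iter n.+1 (fun y => Ps (M (S (Ps y)))) x = Ps (iter n.+1 B x).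
  by rewrite iterS /B Ps_idem.
have -> : iter n.+1 (fun y => M (S y)) x = qk n.+1 + Ps (xk n.+1) by rewrite /qk subrK.
rewrite -addrA (le_trans (nrmD _ _)) // (le_trans (lerD (qk_le _) (pk_le _))) //.
have sum_qk : \sum_(i < n.+1) nrm (qk i) <= K * nrm x * ((1 + n.+1%:R * e) / (1 - dl)).
  apply: le_trans (ler_sum _ (fun (i : 'I_n.+1) _ => qk_le i)) _.
  rewrite -mulr_sumr ler_wpM2l ?mulr_ge0 ?nrm_ge0 // big_split /= sumr_const card_ord.
  rewrite -[e / (1 - dl) *+ _]mulr_natl mulrDl mul1r mulrA lerD2r.
  exact: sum_expr_le_inv.
have subdl_gt0 : 0 < 1 - dl by rewrite subr_gt0.
have := ler_wpM2l e_ge0 sum_qk; have := mulr_ge0 K_ge0 (nrm_ge0 x).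
rewrite !mulrA; nra.
Qed.

End Trajectory.

Definition error_bound (R : realType) (c2 dt t b cp : R) (n : nat) : R :=
  c2 * dt ^+ n + t * b / n%:R
  + n%:R^-1 * ((t * b * cp * c2 * (2 + t * b * cp * c2) * (dt - dt ^+ n)) / (1 - dt))
    * expR (2 * t * b * cp * c2).

Section ErrorBound.
Variables (R : realType) (dt t b cp : R).
Hypotheses (dt_gt0 : 0 < dt) (dt_lt1 : dt < 1) (t_ge0 : 0 <= t) (b_ge0 : 0 <= b).

Lemma geometric_gap_ge n : (1 < n)%N -> dt <= (dt - dt ^+ n) / (1 - dt).
Proof.
move=> n_gt1; rewrite ler_pdivlMr ?subr_gt0 // mulrBr mulr1 lerB // -expr2.
by apply: ler_wiXn2l; rewrite ?ltW.
Qed.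

Lemma c2_le_error_bound c2 n : 0 <= cp -> 0 <= c2 -> (0 < n)%N ->
  c2 * dt ^+ n <= error_bound c2 dt t b cp n.
Proof.
move=> cp_ge0 c2_ge0 n_gt0; rewrite /error_bound -addrA lerDl addr_ge0 //.
  by rewrite divr_ge0 ?mulr_ge0.
have w_ge0 : 0 <= t * b * cp * c2 by rewrite !mulr_ge0.
have gap_ge0 : 0 <= dt - dt ^+ n.
  by rewrite subr_ge0 -[X in _ <= X]expr1 ler_wiXn2l ?ltW.
rewrite mulr_ge0 ?expR_ge0 // mulr_ge0 ?invr_ge0 // divr_ge0 ?subr_ge0 ?(ltW dt_lt1) //.
by rewrite !mulr_ge0 // addr_ge0.
Qed.

Section ErrorConstant.
Variables (K d : R).
Hypotheses (K_ge1 : 1 <= K) (d_ge0 : 0 <= d) (d_lt_dt : d < dt).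

Let subd_gt0 : 0 < 1 - d.
Proof. by rewrite subr_gt0 (lt_trans d_lt_dt). Qed.

Let c2 := K / ((1 - d) * dt).

Let c2_dt : c2 * dt = K / (1 - d).
Proof. by rewrite /c2; field; rewrite ?gt_eqF ?subd_gt0. Qed.

Let K_le_c2 : K <= c2.
Proof.
rewrite /c2 ler_pdivlMr ?mulr_gt0 // ler_piMr ?(le_trans ler01 K_ge1) //.
by rewrite (le_trans _ (ltW dt_lt1)) // ler_piMl ?(ltW dt_gt0) // gerBl.
Qed.

Lemma K_le_error_bound : 0 <= cp -> K <= error_bound c2 dt t b cp 1.
Proof.
move=> cp_ge0; apply: le_trans (c2_le_error_bound cp_ge0 _ _) => //; last first.
  exact: le_trans (le_trans ler01 K_ge1) K_le_c2.
rewrite expr1 c2_dt ler_pdivlMr // ler_piMr ?(le_trans ler01 K_ge1) //.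
by rewrite gerBl.
Qed.

Lemma c2_ge0 : 0 <= c2.
Proof. exact: divr_ge0 (le_trans ler01 K_ge1) (mulr_ge0 (ltW subd_gt0) (ltW dt_gt0)). Qed.

Lemma compression_rate_le_error_bound n : 1 <= cp -> (1 < n)%N ->
  compression_rate K d (t / n%:R * b) n <= error_bound c2 dt t b cp n.
Proof.
move=> cp_ge1 n_gt1; rewrite /compression_rate /error_bound -/c2.
have c2_ge1 : 1 <= c2 := le_trans K_ge1 K_le_c2.
have head : K * d ^+ n <= c2 * dt ^+ n.
  apply: ler_pM; rewrite ?exprn_ge0 ?(le_trans ler01 K_ge1) //.
  by apply: lerXn2r; rewrite ?nnegrE ?(ltW dt_gt0) ?(ltW d_lt_dt).
have N_gt0 : (0 : R) < n%:R by rewrite ltr0n (ltn_trans _ n_gt1).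
set N := n%:R; set q := t / N * b.
have q_ge0 : 0 <= q := mulr_ge0 (divr_ge0 t_ge0 (ltW N_gt0)) b_ge0.
have tbq : t * b = N * q by rewrite /q; field; rewrite gt_eqF.
set w := t * b * cp * c2.
have mid : K * (2 * q / (1 - d) + N * q ^+ 2 / (1 - d)) <= N^-1 * (w * (2 + w)) * dt.
  have -> : N^-1 * (w * (2 + w)) * dt
      = c2 * dt * (2 * (q * cp) + N * (q ^+ 2 * (cp * cp * c2))).
    by rewrite /w tbq; field; rewrite gt_eqF.
  have -> : K * (2 * q / (1 - d) + N * q ^+ 2 / (1 - d))
      = K / (1 - d) * (2 * q + N * q ^+ 2) by field; rewrite gt_eqF.
  rewrite c2_dt ler_wpM2l ?divr_ge0 ?(le_trans ler01 K_ge1) ?(ltW subd_gt0) //.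
  have cp2c2 : 1 <= cp * cp * c2 := mulr_ege1 (mulr_ege1 cp_ge1 cp_ge1) c2_ge1.
  by apply: lerD; apply: ler_wpM2l; rewrite ?ler0n ?ler_peMr ?exprn_ge0 ?(ltW N_gt0).
have cp_ge0 := le_trans ler01 cp_ge1; have c2_ge0 := le_trans ler01 c2_ge1.
have tail : N^-1 * (w * (2 + w)) * dt
    <= N^-1 * (w * (2 + w) * (dt - dt ^+ n) / (1 - dt)) * expR (2 * t * b * cp * c2).
  have E1 : 1 <= expR (2 * t * b * cp * c2).
    rewrite (le_trans _ (expR_ge1Dx _)) // lerDl.
    exact: mulr_ge0 (mulr_ge0 (mulr_ge0 (mulr_ge0 (ler0n _ 2) t_ge0) b_ge0) cp_ge0) c2_ge0.
  have u_ge0 : 0 <= N^-1 * (w * (2 + w)).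
    have w_ge0 : 0 <= w := mulr_ge0 (mulr_ge0 (mulr_ge0 t_ge0 b_ge0) cp_ge0) c2_ge0.
    apply: mulr_ge0; first by rewrite invr_ge0 ltW.
    exact: mulr_ge0 w_ge0 (addr_ge0 (ler0n _ 2) w_ge0).
  have gap := geometric_gap_ge n_gt1.
  have -> : N^-1 * (w * (2 + w) * (dt - dt ^+ n) / (1 - dt))
      = N^-1 * (w * (2 + w)) * ((dt - dt ^+ n) / (1 - dt)) by ring.
  apply: le_trans (ler_wpM2l u_ge0 gap) _.
  exact: ler_peMr (mulr_ge0 u_ge0 (le_trans (ltW dt_gt0) gap)) E1.
by have := divr_ge0 (mulr_ge0 t_ge0 b_ge0) (ltW N_gt0); lra.
Qed.

End ErrorConstant.
End ErrorBound.

Section SemigroupCompression.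
Variables (R : realType) (X : completeNormedModType R[i]).
Variables (T : R -> {linear X -> X}) (D : set X) (L : X -> X) (M : {linear X -> X}).
Variables (J : nat) (P : 'I_J -> {linear X -> X}) (lam : 'I_J -> R[i]).
Variables (delta ct b dt : R).
Hypotheses (semiT : C0_contraction_semigroup T) (genL : is_generator T D L).
Hypotheses (M1 : contraction M) (P1 : forall j, contraction (P j)).
Hypothesis Psum1 : contraction (Psum P).
Hypothesis orthP : forall j k x, P j (P k x) = if j == k then P j x else 0.
Hypotheses (lam1 : forall j, `|lam j| = 1) (delta_gt0 : 0 < delta) (delta_lt1 : delta < 1).
Hypothesis ct_ge0 : 0 <= ct.
Hypothesis asymptotics : forall n : nat, (0 < n)%N ->
  opnorm (fun x => iter n M x - \sum_(j < J) (lam j ^+ n) *: P j x) <= ct * delta ^+ n.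
Hypotheses (b_ge0 : 0 <= b) (denseD : closure D = setT).
Hypothesis ML_bounded : forall x, D x -> `|M (L x)| <= b%:C * `|x|.
Hypotheses (delta_lt_dt : delta < dt) (dt_lt1 : dt < 1).

Let dt_gt0 : 0 < dt := lt_trans delta_gt0 delta_lt_dt.

Let K_ge1 : 1 <= ct + 2.
Proof. by apply: (@le_trans _ _ 2); rewrite ?lerDr ?ler1n. Qed.

Lemma compression_estimate s n x : 0 <= s -> (0 < n)%N ->
  nrm (iter n (fun y => M (T s y)) x - iter n (fun y => Psum P (M (T s (Psum P y)))) x)
  <= compression_rate (ct + 2) delta (s * b) n * nrm x.
Proof.
move=> s_ge0 n_gt0; apply: (trajectory_bound (Ps := Psum P)) => //.
- exact: semigroup_contraction.
- exact: Psum_idem.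
- move=> y; exact: (Psum_M orthP M1 P1 lam1 delta_gt0 delta_lt1 ct_ge0 asymptotics y).
- move=> y; exact: (M_semigroup_increment semiT genL M1 b_ge0 denseD ML_bounded y s_ge0).
- move=> m z.
  exact: (iter_M_Psum_compl orthP M1 P1 lam1 delta_gt0 delta_lt1 ct_ge0 asymptotics Psum1).
- exact: mulr_ge0.
- exact: le_trans ler01 K_ge1.
- exact: ltW.
Qed.

Lemma compression_contraction_bound s n x : 0 <= s ->
  nrm (iter n (fun y => M (T s y)) x - iter n (fun y => Psum P (M (T s (Psum P y)))) x)
  <= 2 * nrm x.
Proof.
move=> s_ge0; have T1 := semigroup_contraction semiT s_ge0.
apply: contraction_iterB; first exact: contraction_comp.
apply: contraction_comp Psum1 (contraction_comp M1 _) => y.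
exact: le_trans (T1 _) (Psum1 y).
Qed.

Lemma compression_exact s n x : opnorm (fun x => x - Psum P x) < 1 ->
  iter n (fun y => Psum P (M (T s (Psum P y)))) x = iter n (fun y => M (T s y)) x.
Proof.
move=> cp_lt1; have Psum_id := projection_id_of_compl_lt1 Psum1 (Psum_idem orthP) cp_lt1.
by apply: eq_iter => y; rewrite !Psum_id.
Qed.

Lemma compression_error_bound t n : (0 < n)%N -> 0 <= t ->
  opnorm (fun x => iter n (fun y => M (T (t / n%:R) y)) x
                   - iter n (fun y => Psum P (M (T (t / n%:R) (Psum P y)))) x)
  <= error_bound ((ct + 2) / ((1 - delta) * dt)) dt t b
       (opnorm (fun x => x - Psum P x)) n.
Proof.
move=> n_gt0 t_ge0; set cp := opnorm (fun x => x - Psum P x).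
have s_ge0 : 0 <= t / n%:R by rewrite divr_ge0.
have cp_ge0 : 0 <= cp := opnorm_ge0 (bounded_op_compl Psum1).
have c2_ge0 := c2_ge0 dt_gt0 dt_lt1 K_ge1 delta_lt_dt.
(* The error bound carries the factor [cp]; for [cp < 1], [Psum P] is the identity. *)
have [cp_lt1|cp_ge1] := ltP cp 1.
  apply: (le_trans _ (c2_le_error_bound dt_gt0 dt_lt1 t_ge0 b_ge0 cp_ge0 c2_ge0 n_gt0)).
  have c2dt_ge0 : 0 <= (ct + 2) / ((1 - delta) * dt) * dt ^+ n.
    exact: mulr_ge0 c2_ge0 (exprn_ge0 _ (ltW dt_gt0)).
  apply: opnorm_le => // x; rewrite compression_exact // subrr nrm0.
  exact: mulr_ge0 c2dt_ge0 (nrm_ge0 x).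
have [n_le1|n_gt1] := leqP n 1; last first.
  apply: (le_trans _ (compression_rate_le_error_bound dt_gt0 dt_lt1 t_ge0 b_ge0 K_ge1
    (ltW delta_gt0) delta_lt_dt cp_ge1 n_gt1)).
  apply: opnorm_le => [|x]; last exact: compression_estimate.
  apply: compression_rate_ge0 (le_trans ler01 K_ge1) (ltW delta_gt0) delta_lt1 _.
  exact: mulr_ge0 s_ge0 b_ge0.
have n1 : n = 1%N by apply/eqP; rewrite eqn_leq n_le1 n_gt0.
rewrite n1 in s_ge0 *.
apply: (le_trans _ (K_le_error_bound dt_gt0 dt_lt1 t_ge0 b_ge0 K_ge1 (ltW delta_gt0)
  delta_lt_dt cp_ge0)).
apply: opnorm_le => [|x]; first exact: le_trans ler01 K_ge1.
rewrite (le_trans (compression_contraction_bound _ _ s_ge0)) // ler_wpM2r ?nrm_ge0 //.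
by rewrite lerDr.
Qed.

End SemigroupCompression.

Unset Implicit Arguments.
Set Strict Implicit.

Theorem lemma6p3 (R : realType) (X : completeNormedModType R[i])
  (T : R -> {linear X -> X}) (D : set X) (L : X -> X)
  (M : {linear X -> X}) (J : nat) (P : 'I_J -> {linear X -> X})
  (lam : 'I_J -> R[i]) (delta ct b dt : R) :
  C0_contraction_semigroup T ->
  is_generator T D L ->
  bounded_op M -> opnorm M <= 1 ->
  (forall j, bounded_op (P j)) ->
  (forall j k x, P j (P k x) = if j == k then P j x else 0) ->
  (forall j, `|lam j| = 1) ->
  0 < delta -> delta < 1 -> 0 < ct ->
  (forall n : nat, (0 < n)%N ->
     opnorm (fun x => iter n M x - \sum_(j < J) (lam j ^+ n) *: P j x)
       <= ct * delta ^+ n) ->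
  0 <= b ->
  (* M L densely defined (on D(L)) and bounded by b *)
  closure D = setT ->
  (forall x, D x -> `|M (L x)| <= b%:C * `|x|) ->
  (* L P_Sigma densely defined (on {x | P_Sigma x in D(L)}) and bounded by b *)
  closure [set x | D (\sum_(j < J) P j x)] = setT ->
  (forall x, D (\sum_(j < J) P j x) ->
     `|L (\sum_(j < J) P j x)| <= b%:C * `|x|) ->
  (forall j, opnorm (P j) = 1) ->
  opnorm (fun x => \sum_(j < J) P j x) = 1 ->
  delta < dt -> dt < 1 ->
  exists eps1 : R, 0 < eps1 /\ exists c2 : R, 0 <= c2 /\
    forall (t : R) (n : nat), (0 < n)%N -> 0 <= t -> t <= n%:R * eps1 ->
      let cp := opnorm (fun x => x - \sum_(j < J) P j x) in
      opnorm (fun x => iter n (fun y => M (T (t / n%:R) y)) x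
                       - iter n (fun y => \sum_(j < J) P j
                                   (M (T (t / n%:R) (\sum_(k < J) P k y)))) x)
      <= c2 * dt ^+ n + t * b / n%:R
         + n%:R^-1 * ((t * b * cp * c2 * (2 + t * b * cp * c2)
                       * (dt - dt ^+ n)) / (1 - dt))
           * expR (2 * t * b * cp * c2).
Proof.
move=> semiT genL bM M_le1 bP orthP lam1 delta_gt0 delta_lt1 ct_gt0 asymptotics b_ge0
  denseD ML_bounded _ _ P_le1 Psum_le1 delta_lt_dt dt_lt1.
have M1 : contraction M := contraction_opnorm bM (linearZZ M) M_le1.
have P1 j : contraction (P j).
  by apply: contraction_opnorm (bP j) (linearZZ _) _; rewrite P_le1.
have Psum1 : contraction (Psum P).
  apply: contraction_opnorm (bounded_op_Psum P1) (linearZZ _) _.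
  by rewrite -[Psum P]/(fun x => \sum_(j < J) P j x) Psum_le1.
have K_ge1 : 1 <= ct + 2 by apply: (@le_trans _ _ 2); rewrite ?lerDr ?ler1n ?ltW.
have c2_ge0 := c2_ge0 (lt_trans delta_gt0 delta_lt_dt) dt_lt1 K_ge1 delta_lt_dt.
exists 1; split=> //; exists ((ct + 2) / ((1 - delta) * dt)); split=> // t n n_gt0 t_ge0 _.
exact: (compression_error_bound semiT genL M1 P1 Psum1 orthP lam1 delta_gt0 delta_lt1
  (ltW ct_gt0) asymptotics b_ge0 denseD ML_bounded delta_lt_dt dt_lt1 n_gt0 t_ge0).
Qed.
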